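(* Let $0<\theta<1$ and let $X$ be a random variable on $\{0,1,2,\dots\}$ with probability mass function \[f(x)=\frac{\theta^x}{x!}-\frac{\theta^{x+1}}{(x+1)!},\quad x=0,1,2,\dots.\] Then the moment generating function of $X$ is $M_X(t)=e^{\theta e^t}(1-e^{-t})+e^{-t}$ for all real $t$, and \[\mathbb E(X)=e^{\theta}-1,\qquad \mathrm{Var}(X)=e^{\theta}\bigl(2\theta+1-e^{\theta}\bigr).\] *)

From Stdlib Require Import Reals Arith.
From Coquelicot Require Import Coquelicot.
Open Scope R_scope.

Definition pmf (theta : R) (x : nat) : R :=
  theta ^ x / INR (fact x) - theta ^ (S x) / INR (fact (S x)).

Definition mgf_is (f : nat -> R) (t : R) (m : R) : Prop :=
  is_series (fun x => exp (t * INR x) * f x) m.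

Definition mean_is (f : nat -> R) (mu : R) : Prop :=
  is_series (fun x => INR x * f x) mu.

Definition var_is (f : nat -> R) (v : R) : Prop :=
  exists mu, mean_is f mu /\ is_series (fun x => (INR x - mu) ^ 2 * f x) v.

(* With a n = θ^n/n!, the pmf is the telescoping difference a n - a (n+1).  Shifting
   the index in the second half gives, for any weight g,
     E[g(X)] = Σ g(n) a n - Σ g(n-1) a n + g(-1),
   and both sums are moments of the exponential series: for g(x) = e^{tx} they are
   e^{θe^t} and e^{-t} e^{θe^t}, for polynomial g they follow from
   Σ n a n = θ e^θ and Σ n^2 a n = θ(θ+1) e^θ. *)

From Stdlib Require Import Reals Arith Lia.
From Coquelicot Require Import Coquelicot.
Open Scope R_scope.

Lemma is_series_congr (a b : nat -> R) (la lb : R) :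
  (forall n, a n = b n) -> la = lb -> is_series a la -> is_series b lb.
Proof. intros Hab <-; apply is_series_ext, Hab. Qed.

Definition exp_term (c : R) (n : nat) : R := c ^ n / INR (fact n).

Lemma pmf_exp_term (theta : R) (n : nat) :
  pmf theta n = exp_term theta n - exp_term theta (S n).
Proof. reflexivity. Qed.

Lemma exp_term_0 (c : R) : exp_term c 0 = 1.
Proof. unfold exp_term; simpl; field. Qed.

Lemma INR_fact_neq_0 (n : nat) : INR (fact n) <> 0.
Proof. apply not_0_INR, fact_neq_0. Qed.

Lemma exp_term_S (c : R) (n : nat) :
  INR (S n) * exp_term c (S n) = c * exp_term c n.
Proof.
  unfold exp_term.
  change (fact (S n)) with (S n * fact n)%nat.
  rewrite mult_INR; simpl pow.
  assert (INR (S n) <> 0) by (apply not_0_INR; lia).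
  pose proof (INR_fact_neq_0 n).
  field; auto.
Qed.

Lemma exp_mul_INR (t : R) (n : nat) : exp (t * INR n) = exp t ^ n.
Proof.
  induction n as [|n IH].
  - simpl; rewrite Rmult_0_r; apply exp_0.
  - rewrite S_INR, Rmult_plus_distr_l, exp_plus, IH, Rmult_1_r; simpl; ring.
Qed.

Lemma exp_mul_INR_exp_term (t c : R) (n : nat) :
  exp (t * INR n) * exp_term c n = exp_term (c * exp t) n.
Proof.
  unfold exp_term; rewrite exp_mul_INR, Rpow_mult_distr; unfold Rdiv; ring.
Qed.

Lemma is_series_exp_term (c : R) : is_series (exp_term c) (exp c).
Proof.
  eapply is_series_congr; [|reflexivity|apply (is_exp_Reals c)].
  intro n; unfold exp_term, scal; simpl; unfold mult; simpl.
  rewrite pow_n_pow; unfold Rdiv; ring.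
Qed.

Lemma is_series_INR_exp_term (c : R) :
  is_series (fun n => INR n * exp_term c n) (c * exp c).
Proof.
  apply is_series_decr_1.
  eapply is_series_congr; [| |apply (is_series_scal c _ _ (is_series_exp_term c))].
  - intro n; rewrite exp_term_S; reflexivity.
  - simpl; unfold plus, opp, scal; simpl; unfold mult; simpl; ring.
Qed.

Lemma is_series_INR_sqr_exp_term (c : R) :
  is_series (fun n => INR n ^ 2 * exp_term c n) (c * (c + 1) * exp c).
Proof.
  apply is_series_decr_1.
  eapply is_series_congr;
    [| |apply (is_series_scal c _ _ (is_series_plus _ _ _ _
        (is_series_INR_exp_term c) (is_series_exp_term c)))].
  - intro n.
    change (c * (INR n * exp_term c n + exp_term c n)
            = INR (S n) ^ 2 * exp_term c (S n)).
    replace (INR (S n) ^ 2 * exp_term c (S n))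
      with (INR (S n) * (INR (S n) * exp_term c (S n))) by ring.
    rewrite exp_term_S, S_INR; ring.
  - simpl; unfold plus, opp, scal; simpl; unfold mult; simpl; ring.
Qed.

Lemma is_series_first_moment_exp_term (c m : R) :
  is_series (fun n => (INR n - m) * exp_term c n) ((c - m) * exp c).
Proof.
  eapply is_series_congr;
    [| |apply (is_series_minus _ _ _ _ (is_series_INR_exp_term c)
               (is_series_scal m _ _ (is_series_exp_term c)))].
  - intro n; unfold plus, opp, scal; simpl; unfold mult; simpl; ring.
  - unfold plus, opp, scal; simpl; unfold mult; simpl; ring.
Qed.

(* Poisson-type second moment about m: variance c plus squared bias (c - m)^2. *)
Lemma is_series_second_moment_exp_term (c m : R) :
  is_series (fun n => (INR n - m) ^ 2 * exp_term c n) (((c - m) ^ 2 + c) * exp c).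
Proof.
  eapply is_series_congr;
    [| |apply (is_series_minus _ _ _ _
               (is_series_plus _ _ _ _ (is_series_INR_sqr_exp_term c)
                  (is_series_scal (m ^ 2) _ _ (is_series_exp_term c)))
               (is_series_scal (2 * m) _ _ (is_series_INR_exp_term c)))].
  - intro n; unfold plus, opp, scal; simpl; unfold mult; simpl; ring.
  - unfold plus, opp, scal; simpl; unfold mult; simpl; ring.
Qed.

(* Abel summation against a telescoping difference; the boundary term g(-1) a 0
   is what shifting Σ g(n-1) a n by one index leaves behind. *)
Lemma is_series_mul_telescope (g : R -> R) (a : nat -> R) (A B : R) :
  is_series (fun n => g (INR n) * a n) A ->
  is_series (fun n => g (INR n - 1) * a n) B ->
  is_series (fun n => g (INR n) * (a n - a (S n))) (A - B + g (-1) * a 0%nat).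
Proof.
  intros HA HB.
  assert (Hshift : is_series (fun n => g (INR n) * a (S n)) (B - g (-1) * a 0%nat)).
  { eapply is_series_congr;
      [| |apply (is_series_incr_1 (fun n => g (INR n - 1) * a n))]; [|reflexivity|].
    - intro n; cbv beta.
      replace (INR (S n) - 1) with (INR n) by (rewrite S_INR; ring); reflexivity.
    - eapply is_series_congr; [reflexivity| |exact HB].
      unfold plus; simpl; replace (0 - 1) with (-1) by ring; ring. }
  eapply is_series_congr; [| |apply (is_series_minus _ _ _ _ HA Hshift)].
  - intro n; unfold plus, opp; simpl; ring.
  - unfold plus, opp; simpl; ring.
Qed.

Lemma mgf_pmf (theta t : R) :
  mgf_is (pmf theta) t (exp (theta * exp t) * (1 - exp (- t)) + exp (- t)).
Proof.
  pose (g x := exp (t * x)).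
  assert (HA : is_series (fun n => g (INR n) * exp_term theta n) (exp (theta * exp t))).
  { eapply is_series_congr; [|reflexivity|apply is_series_exp_term].
    intro n; unfold g; rewrite exp_mul_INR_exp_term; reflexivity. }
  assert (HB : is_series (fun n => g (INR n - 1) * exp_term theta n)
                         (exp (- t) * exp (theta * exp t))).
  { eapply is_series_congr; [|reflexivity|apply (is_series_scal (exp (- t)) _ _ HA)].
    intro n; unfold g, scal; simpl; unfold mult; simpl.
    rewrite <- Rmult_assoc, <- exp_plus; do 2 f_equal; ring. }
  eapply is_series_congr; [| |apply (is_series_mul_telescope g _ _ _ HA HB)].
  - intro n; rewrite pmf_exp_term; reflexivity.
  - unfold g; rewrite exp_term_0; replace (t * -1) with (- t) by ring; ring.
Qed.

Lemma mean_pmf (theta : R) : mean_is (pmf theta) (exp theta - 1).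
Proof.
  eapply is_series_congr; [| |apply (is_series_mul_telescope (fun x => x) _ _ _
      (is_series_INR_exp_term theta) (is_series_first_moment_exp_term theta 1))].
  - intro n; rewrite pmf_exp_term; reflexivity.
  - rewrite exp_term_0; ring.
Qed.

Lemma var_pmf (theta : R) :
  var_is (pmf theta) (exp theta * (2 * theta + 1 - exp theta)).
Proof.
  exists (exp theta - 1); split; [apply mean_pmf|].
  set (mu := exp theta - 1).
  assert (HB : is_series (fun n => (INR n - 1 - mu) ^ 2 * exp_term theta n)
                         (((theta - (mu + 1)) ^ 2 + theta) * exp theta)).
  { eapply is_series_congr; [|reflexivity|apply is_series_second_moment_exp_term].
    intro n; cbv beta; ring. }
  eapply is_series_congr; [| |apply (is_series_mul_telescope (fun x => (x - mu) ^ 2)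
      _ _ _ (is_series_second_moment_exp_term theta mu) HB)].
  - intro n; rewrite pmf_exp_term; reflexivity.
  - rewrite exp_term_0; unfold mu; ring.
Qed.

(* The hypothesis on theta only makes pmf theta a probability mass function;
   the three identities hold for every real theta. *)
Theorem mainTheorem4 (theta : R) (Htheta : 0 < theta < 1) :
  (forall t : R,
     mgf_is (pmf theta) t (exp (theta * exp t) * (1 - exp (- t)) + exp (- t)))
  /\ mean_is (pmf theta) (exp theta - 1)
  /\ var_is (pmf theta) (exp theta * (2 * theta + 1 - exp theta)).
Proof.
  split; [|split].
  - intro t; apply mgf_pmf.
  - apply mean_pmf.
  - apply var_pmf.
Qed.
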